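(* Let $\Sigma=(X,U,F)$ be a system and $Q\subset X$ be controlled invariant. Then \[h_{inv}(Q)\le\inf_{V}\log\rho(M_{Q,V}),\] where the infimum is over all finite $V\subset U$ that cover $Q$, and $\rho$ denotes the spectral radius.
   Context: A system is a triple $\Sigma=(X,U,F)$ where $X,U$ are nonempty sets and $F:X\times U\rightrightarrows X$ is a set-valued map with $F(x,u)\neq\emptyset$ for all $(x,u)$; for $A\subset X$, $F(A,u)=\bigcup_{x\in A}F(x,u)$. $Q\subset X$ is controlled invariant if for every $x\in Q$ there is $u\in U$ with $F(x,u)\subset Q$. For $u\in U$ put $Q_u=\{x\in Q:F(x,u)\subset Q\}$. Elements of $U^n$ are written $\omega=\omega_0\cdots\omega_{n-1}$, $\omega_{[0,i]}=\omega_0\cdots\omega_i$. A set $S\subset U^n$ is an admissible family of length $n$ for $Q$ if (a) $\omega'_0=\omega''_0$ for all $\omega',\omega''\in S$, and (b) there exists $x\in Q$ such that for every $\omega\in S$, with $I^0_\omega(x)=\{x\}$: for all $i=0,\dots,n-2$, $F(I^i_\omega(x),\omega_i)\subset\bigcup_{\omega'\in S,\ \omega'_{[0,i]}=\omega_{[0,i]}}Q_{\omega'_{i+1}}$ and $I^{i+1}_\omega(x):=F(I^i_\omega(x),\omega_i)\cap Q_{\omega_{i+1}}\neq\emptyset$; and $I^n_\omega(x):=F(I^{n-1}_\omega(x),\omega_{n-1})\subset Q$. Let $AF^n(Q)$ be the set of such families and $Q_S$ the set of $x\in Q$ satisfying (b). A set $\mathscr{S}\subset U^n$ is $(n,Q)$-spanning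 if $Q\subset\bigcup_{S\subset\mathscr{S},\,S\in AF^n(Q)}Q_S$; $r_{inv}(n,Q)$ is the infimum of $\sharp\mathscr{S}$ over such sets, and $h_{inv}(Q)=\limsup_{n\to\infty}\frac1n\log r_{inv}(n,Q)$ ($\log$ base $2$). A set $V\subset U$ is a cover of $Q$ if $Q\subset\bigcup_{a\in V}Q_a$. The admissible matrix $M_{Q,V}=(M_{ab})_{a,b\in V}$ has $M_{ab}=1$ if there exists $x\in Q_a$ with $F(x,a)\cap Q_b\neq\emptyset$, and $M_{ab}=0$ otherwise. The infimum of the empty set is $+\infty$. *)

From HB Require Import structures.
From mathcomp Require Import all_boot all_order all_algebra.
From mathcomp Require Import all_classical all_reals.
From mathcomp Require Import ereal sequences exp.
From mathcomp.real_closed Require Import complex.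

Set Implicit Arguments.
Unset Strict Implicit.
Unset Printing Implicit Defensive.

Import Order.TTheory GRing.Theory Num.Theory.
Local Open Scope classical_set_scope.
Local Open Scope ring_scope.

Section ControlSystems.
Variables (X U : Type) (F : X -> U -> set X).

Definition Fimg (A : set X) (u : U) : set X :=
  [set y | exists2 x, A x & F x u y].

Definition controlled_invariant (Q : set X) : Prop :=
  forall x, Q x -> exists u, F x u `<=` Q.

Definition Qu (Q : set X) (u : U) : set X := [set x | Q x /\ F x u `<=` Q].

Variable n : nat.
(* words omega in U^n are functions 'I_n -> U; omega_i is w i *)

(* F(A, omega_i), only meaningful for i < n (set0 otherwise, never used) *)
Definition stepF (w : 'I_n -> U) (A : set X) (i : nat) : set X :=
  match (insub i : option 'I_n) with
  | Some j => Fimg A (w j) | None => set0 end.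

(* Q_{omega_i}, only meaningful for i < n *)
Definition stepQ (Q : set X) (w : 'I_n -> U) (i : nat) : set X :=
  match (insub i : option 'I_n) with
  | Some j => Qu Q (w j) | None => set0 end.

Fixpoint Iset (Q : set X) (w : 'I_n -> U) (x : X) (i : nat) : set X :=
  match i with
  | 0 => [set x]
  | i'.+1 => stepF w (Iset Q w x i') i' `&` stepQ Q w i
  end.

Definition same_prefix (w' w : 'I_n -> U) (i : nat) : Prop :=
  forall j : 'I_n, (j <= i)%N -> w' j = w j.

(* condition (b) of the definition of admissible family, at the point x *)
Definition adm_point (Q : set X) (S : set ('I_n -> U)) (x : X) : Prop :=
  Q x /\
  forall w, S w ->
    (forall i, (i.+2 <= n)%N ->
        stepF w (Iset Q w x i) i `<=`
          \bigcup_(w' in [set w' | S w' /\ same_prefix w' w i]) stepQ Q w' i.+1)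
    /\ (forall i, (i.+2 <= n)%N -> Iset Q w x i.+1 !=set0)
    /\ (forall i, i.+1 = n -> stepF w (Iset Q w x i) i `<=` Q).

Definition QS (Q : set X) (S : set ('I_n -> U)) : set X := adm_point Q S.

Definition admissible (Q : set X) (S : set ('I_n -> U)) : Prop :=
  S !=set0 /\
  (forall w' w'', S w' -> S w'' -> forall j : 'I_n, val j = 0%N -> w' j = w'' j) /\
  QS Q S !=set0.

Definition spanning (Q : set X) (Sc : set ('I_n -> U)) : Prop :=
  Q `<=` \bigcup_(S in [set S | S `<=` Sc /\ admissible Q S]) QS Q S.

End ControlSystems.

Definition has_card (T : Type) (A : set T) (k : nat) : Prop :=
  exists f : 'I_k -> T, injective f /\ range f = A.

Section Entropy.
Variable R : realType.
Local Open Scope ereal_scope.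

Definition elog2 (r : \bar R) : \bar R :=
  match r with
  | +oo => +oo
  | -oo => -oo
  | r'%:E => if r' == 0%R then -oo else (ln r' / ln 2)%:E
  end.

(* r_inv(n,Q): infimum of the cardinalities of (n,Q)-spanning sets
   (+oo if there is no finite one) *)
Definition r_inv (X U : Type) (F : X -> U -> set X) (n : nat) (Q : set X) : \bar R :=
  ereal_inf [set (k%:R)%:E | k in
     [set k | exists Sc : set ('I_n -> U), spanning F Q Sc /\ has_card Sc k]].

Definition h_inv (X U : Type) (F : X -> U -> set X) (Q : set X) : \bar R :=
  limn_esup (fun n => ((n%:R)^-1)%:E * elog2 (r_inv F n Q)).

(* spectral radius of a complex square matrix: max modulus of eigenvalues
   (0 for the empty matrix) *)
Definition spectral_radius (k : nat) (A : 'M[R[i]]_k) : R :=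
  sup ([set 0%R] `|` [set Normc.normc l | l in [set l | eigenvalue A l]]).

(* admissible matrix M_{Q,V}, V enumerated injectively by e : 'I_k -> U *)
Definition adm_matrix (X U : Type) (F : X -> U -> set X) (Q : set X)
    (k : nat) (e : 'I_k -> U) : 'M[R[i]]_k :=
  \matrix_(a, b) (if `[< exists x, Qu F Q (e a) x /\ (F x (e a) `&` Qu F Q (e b)) !=set0 >]
                  then 1 else 0)%R.

Definition is_cover (X U : Type) (F : X -> U -> set X) (Q : set X) (V : set U) : Prop :=
  Q `<=` \bigcup_(a in V) Qu F Q a.

End Entropy.

(* Fix a finite cover [e] of [Q] and a point [x] of [Q], say [x] in [Q_(e a0)].
   The words [e \o c], where [c] runs over the index sequences starting at [a0]
   along which the sets [I^i(x)] stay nonempty, form an admissible family at [x]: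
   a point of [F(I^i, w_i)] lies in some [Q_(e b)], so the word can be redirected
   to [b] at step [i+1] and then extended greedily.  Consecutive letters of these
   words are edges of the graph of [M_{Q,V}], hence [r_inv(m+1, Q)] is at most the
   number of walks with [m] edges, i.e. the sum of the entries of [M^m].  By
   Cayley-Hamilton these entries satisfy a linear recurrence whose characteristic
   roots are the eigenvalues of [M], so they are [O(s^m)] for every [s > rho(M)],
   and [h_inv(Q) <= log s]. *)

From HB Require Import structures.
From mathcomp Require Import all_boot all_order all_algebra.
From mathcomp Require Import all_classical all_reals.
From mathcomp Require Import ereal sequences exp.
From mathcomp.real_closed Require Import complex.
From mathcomp Require Import ring lra.

Set Implicit Arguments.
Unset Strict Implicit.
Unset Printing Implicit Defensive.

Import Order.TTheory GRing.Theory Num.Theory.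
Local Open Scope ring_scope.

Section LinearRecurrence.
Variable R : rcfType.
Local Notation C := R[i].
Local Notation normc := (@Normc.normc R).

Lemma normc_ge0 (z : C) : 0 <= normc z.
Proof. by case: z => a b; apply: sqrtr_ge0. Qed.

Lemma normc_sum (I : finType) (f : I -> C) : normc (\sum_i f i) <= \sum_i normc (f i).
Proof.
elim/big_rec2: _ => [|i y1 y2 _ h]; first by rewrite Normc.normc0.
by apply: le_trans (le_normcD _ _) _; rewrite lerD2l.
Qed.

Definition annihilates (p : {poly C}) (u : nat -> C) :=
  forall n, \sum_(j < size p) p`_j * u (n + j)%N = 0.

Lemma sum_coef_widen (p : {poly C}) u n N : (size p <= N)%N ->
  \sum_(j < size p) p`_j * u (n + j)%N = \sum_(j < N) p`_j * u (n + j)%N.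
Proof.
move=> le_pN; rewrite -(subnKC le_pN) big_split_ord /= [X in _ = _ + X]big1 ?addr0 //.
by move=> i _; rewrite nth_default ?mul0r // leq_addr.
Qed.

Lemma annihilates_XsubC_mul (lam : C) q u : annihilates (('X - lam%:P) * q) u ->
  annihilates q (fun n => u n.+1 - lam * u n).
Proof.
move=> annu n; have := annu n.
rewrite (@sum_coef_widen _ _ _ (size q).+1); last first.
  by apply: leq_trans (size_polyMleq _ _) _; rewrite size_XsubC.
rewrite mulrBl.
under eq_bigr => j _ do rewrite coefB coefXM coefCM mulrBl.
rewrite sumrB big_ord_recl /= mul0r add0r.
under [X in _ - X = _]eq_bigr => j _ do rewrite -mulrA.
rewrite -mulr_sumr -(@sum_coef_widen q u n) // => eq0; rewrite -[RHS]eq0.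
under eq_bigr => j _ do rewrite mulrBr.
rewrite sumrB mulr_sumr; congr (_ - _); apply: eq_bigr => j _.
  by rewrite add0n /bump /= add1n addnS.
by rewrite mulrCA.
Qed.

(* Discrete Gronwall: [D := |u 0| + D0 / (s - |lam|)] satisfies [|lam| D + D0 <= s D]. *)
Lemma geometric_bound_affine (lam : C) (u v : nat -> C) (s D0 : R) :
  normc lam < s -> 0 <= D0 -> (forall n, normc (v n) <= D0 * s ^+ n) ->
  (forall n, u n.+1 = lam * u n + v n) ->
  exists2 D, 0 <= D & forall n, normc (u n) <= D * s ^+ n.
Proof.
move=> lam_lt_s D0_ge0 v_le u_rec.
have lam_ge0 := normc_ge0 lam.
have gap_gt0 : 0 < s - normc lam by rewrite subr_gt0.
pose D := normc (u 0%N) + D0 / (s - normc lam).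
have D_ge0 : 0 <= D by rewrite addr_ge0 ?normc_ge0 // divr_ge0 // ltW.
have D0_le : D0 <= (s - normc lam) * D.
  by rewrite mulrDr mulrCA divff ?mulr1 ?gt_eqF // lerDr mulr_ge0 ?normc_ge0 // ltW.
exists D => //; elim=> [|n IHn]; first by rewrite expr0 mulr1 lerDl divr_ge0 // ltW.
rewrite u_rec; apply: le_trans (le_normcD _ _) _; rewrite Normc.normcM exprS.
have sn_ge0 : 0 <= s ^+ n by rewrite exprn_ge0 // (le_trans lam_ge0) ?ltW.
have lam_u_le : normc lam * normc (u n) <= normc lam * (D * s ^+ n) by rewrite ler_wpM2l.
have D0_sn_le : D0 * s ^+ n <= (s - normc lam) * D * s ^+ n by rewrite ler_wpM2r.
have := v_le n; nra.
Qed.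

Lemma annihilated_geometric_bound (rs : seq C) (s : R) u :
  (forall z, z \in rs -> normc z < s) ->
  annihilates (\prod_(z <- rs) ('X - z%:P)) u ->
  exists2 D, 0 <= D & forall n, normc (u n) <= D * s ^+ n.
Proof.
elim: rs u => [|lam rs IH] u rs_lt annu.
  exists 0 => // n; have := annu n.
  by rewrite big_nil size_poly1 big_ord1 coef1 mul1r addn0 => ->; rewrite Normc.normc0 mul0r.
rewrite big_cons in annu.
have rs_lt' z : z \in rs -> normc z < s by move=> zrs; apply: rs_lt; rewrite inE zrs orbT.
have [D0 D0_ge0 v_le] := IH _ rs_lt' (annihilates_XsubC_mul annu).
apply: (geometric_bound_affine (rs_lt _ (mem_head _ _)) D0_ge0 v_le) => n.
by rewrite addrC subrK.
Qed.

Lemma horner_mx_sum k (A : 'M[C]_k.+1) (p : {poly C}) :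
  horner_mx A p = \sum_(j < size p) p`_j *: A ^+ j.
Proof.
rewrite -{1}[p]coefK poly_def linear_sum; apply: eq_bigr => j _.
by rewrite linearZ /= rmorphXn /= horner_mx_X.
Qed.

Lemma char_poly_annihilates_mx_pow k (A : 'M[C]_k.+1) a b :
  annihilates (char_poly A) (fun n => (A ^+ n) a b).
Proof.
move=> n.
have : A ^+ n * horner_mx A (char_poly A) =
    \sum_(j < size (char_poly A)) (char_poly A)`_j *: A ^+ (n + j).
  rewrite horner_mx_sum mulr_sumr; apply: eq_bigr => j _.
  by rewrite -scalerAr exprD.
rewrite Cayley_Hamilton mulr0 => /(congr1 (fun M : 'M[C]_k.+1 => M a b)).
rewrite mxE summxE => entry_eq; rewrite [RHS]entry_eq.
by apply: eq_bigr => j _; rewrite mxE.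
Qed.

Lemma mx_pow_geometric_bound k (A : 'M[C]_k.+1) (s : R) : 0 <= s ->
  (forall z, eigenvalue A z -> normc z < s) ->
  exists2 D, 0 <= D & forall n a b, normc ((A ^+ n) a b) <= D * s ^+ n.
Proof.
move=> s_ge0 eig_lt.
have [rs char_rs] := closed_field_poly_normal (char_poly A).
rewrite (monicP (char_poly_monic A)) scale1r in char_rs.
have entry_bound (ab : 'I_k.+1 * 'I_k.+1) : exists2 D, 0 <= D &
    forall n, normc ((A ^+ n) ab.1 ab.2) <= D * s ^+ n.
  apply: (@annihilated_geometric_bound rs).
    by move=> z zrs; apply: eig_lt; rewrite eigenvalue_root_char char_rs root_prod_XsubC.
  by rewrite -char_rs; apply: char_poly_annihilates_mx_pow.
have [Dab Dab_ge0 Dab_le] := fin_all_exists2 entry_bound.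
exists (\sum_ab Dab ab); first by rewrite sumr_ge0.
move=> n a b; apply: le_trans (Dab_le (a, b) n) _.
by rewrite ler_wpM2r ?exprn_ge0 // (bigD1 (a, b)) //= lerDl sumr_ge0.
Qed.

End LinearRecurrence.

Section WalkCounting.
Variables (T : finType) (E : rel T).

Definition is_walk n (c : {ffun 'I_n -> T}) : bool :=
  [forall i : 'I_n, forall j : 'I_n, (val j == (val i).+1) ==> E (c i) (c j)].

Fixpoint nwalks (m : nat) (b : T) : nat :=
  if m is m'.+1 then \sum_a E a b * nwalks m' a else 1.

Definition walk_init n (c : {ffun 'I_n.+1 -> T}) : {ffun 'I_n -> T} :=
  [ffun i => c (widen_ord (leqnSn n) i)].

Lemma is_walk_init n (c : {ffun 'I_n.+1 -> T}) : is_walk c -> is_walk (walk_init c).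
Proof.
move=> /forallP c_walk; apply/forallP => i; apply/forallP => j; rewrite !ffunE.
by have /forallP := c_walk (widen_ord (leqnSn n) i); apply.
Qed.

Lemma walk_init_inj n (c1 c2 : {ffun 'I_n.+1 -> T}) :
  c1 ord_max = c2 ord_max -> walk_init c1 = walk_init c2 -> c1 = c2.
Proof.
move=> eq_last eq_init; apply/ffunP => i; have [lt_in|] := ltnP i n.
  have := congr1 (fun f : {ffun 'I_n -> T} => f (Ordinal lt_in)) eq_init.
  by rewrite !ffunE (_ : widen_ord _ _ = i) //; apply: val_inj.
rewrite leq_eqVlt ltnNge -ltnS ltn_ord orbF => /eqP i_max.
by rewrite (_ : i = ord_max) //; apply: val_inj.
Qed.

Lemma card_walks_last m b :
  (#|[set c : {ffun 'I_m.+1 -> T} | is_walk c && (c ord_max == b)]| <= nwalks m b)%N.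
Proof.
elim: m b => [|m IH] b.
  have sub1 : [set c : {ffun 'I_1 -> T} | is_walk c && (c ord_max == b)] \subset [set [ffun=> b]].
    apply/fintype.subsetP => c; rewrite !inE => /andP[_ /eqP <-].
    by apply/eqP/ffunP => i; rewrite ffunE (ord1 i) (_ : ord_max = ord0) //; apply: val_inj.
  by rewrite (leq_trans (subset_leq_card sub1)) ?cards1.
rewrite -sum1dep_card (partition_big (fun c => walk_init c ord_max) xpredT) //=.
apply: leq_sum => a _; rewrite sum1dep_card.
have [Eab|nEab] := boolP (E a b); last first.
  rewrite mul0n leqn0 cards_eq0; apply/eqP/setP => c; rewrite !inE ffunE.
  apply/negP => /andP[/andP[/forallP c_walk /eqP cb] /eqP ca].
  by move/forallP: (c_walk (widen_ord (leqnSn m.+1) ord_max)) => /(_ ord_max) /=;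
    rewrite eqxx ca cb (negbTE nEab).
rewrite mul1n (leq_trans _ (IH a)) // -(card_in_imset (f := @walk_init m.+1)).
  apply/subset_leq_card/fintype.subsetP => y /imsetP[c].
  by rewrite !inE => /andP[/andP[c_walk _] ca] ->; rewrite is_walk_init.
move=> c1 c2; rewrite !inE => /andP[/andP[_ /eqP c1b] _] /andP[/andP[_ /eqP c2b] _].
by apply: walk_init_inj; rewrite c1b c2b.
Qed.

Lemma card_walks m :
  (#|[set c : {ffun 'I_m.+1 -> T} | is_walk c]| <= \sum_b nwalks m b)%N.
Proof.
rewrite -sum1dep_card (partition_big (fun c : {ffun 'I_m.+1 -> T} => c ord_max) xpredT) //=.
by apply: leq_sum => b _; rewrite sum1dep_card card_walks_last.
Qed.

End WalkCounting.

Lemma nwalks_mx_pow (R : pzRingType) n (E : rel 'I_n) m b :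
  (nwalks E m b)%:R = \sum_a ((\matrix_(a, b) (E a b)%:R : 'M[R]_n) ^+ m) a b.
Proof.
elim: m b => [|m IH] b /=.
  by rewrite expr0 (bigD1 b) //= big1 => [|a /negbTE nab]; rewrite mxE ?eqxx ?addr0 ?nab.
rewrite natr_sum.
under [RHS]eq_bigr => a _ do rewrite exprSr mxE.
rewrite exchange_big /=; apply: eq_bigr => a _.
by rewrite -mulr_suml -IH mxE -natrM mulnC.
Qed.

Local Open Scope classical_set_scope.

Section Words.
Variables (X U : Type) (F : X -> U -> set X) (Q : set X) (n : nat).
Implicit Types (w : 'I_n -> U) (x : X).

Lemma stepF_ord w A i (lt_in : (i < n)%N) : stepF F w A i = Fimg F A (w (Ordinal lt_in)).
Proof. by rewrite /stepF insubT. Qed.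

Lemma stepQ_ord w i (lt_in : (i < n)%N) : stepQ F Q w i = Qu F Q (w (Ordinal lt_in)).
Proof. by rewrite /stepQ insubT. Qed.

Lemma Iset_eq_prefix w w' x i : (forall j : 'I_n, (j <= i)%N -> w j = w' j) ->
  Iset F Q w x i = Iset F Q w' x i.
Proof.
elim: i => [//|i IH] eq_ww' /=.
rewrite IH => [|j le_ji]; last by rewrite eq_ww' // leqW.
congr (_ `&` _).
  by rewrite /stepF; case: insubP => [j _ ji|//]; rewrite eq_ww' // ji leqnSn.
by rewrite /stepQ; case: insubP => [j _ ji|//]; rewrite eq_ww' // ji.
Qed.

Lemma Iset_sub_Qu w x i (lt_in : (i < n)%N) (n_gt0 : (0 < n)%N) :
  Qu F Q (w (Ordinal n_gt0)) x -> Iset F Q w x i `<=` Qu F Q (w (Ordinal lt_in)).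
Proof.
move=> x_in; case: i lt_in => [|i] lt_in /=.
  by move=> y ->; rewrite (_ : Ordinal lt_in = Ordinal n_gt0) //; apply: val_inj.
by move=> y [_]; rewrite stepQ_ord.
Qed.

End Words.

Section PathSpanning.
Variables (X U : Type) (F : X -> U -> set X).
Hypothesis F_neq0 : forall x u, F x u !=set0.
Variables (Q : set X) (k : nat) (e : 'I_k -> U).
Hypothesis e_cover : is_cover F Q (range e).

Definition adm_edge (a b : 'I_k) : bool :=
  `[< exists x, Qu F Q (e a) x /\ (F x (e a) `&` Qu F Q (e b)) !=set0 >].

Lemma cover_Qu y : Q y -> exists b, Qu F Q (e b) y.
Proof. by move=> /e_cover [_ [b _ <-] y_in]; exists b. Qed.

Section Itineraries.
Variables (m : nat) (x : X) (a0 : 'I_k).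
Hypothesis x_in : Qu F Q (e a0) x.
Implicit Type c : 'I_m.+1 -> 'I_k.

Definition feasible c :=
  c ord0 = a0 /\ forall i, (i <= m)%N -> Iset F Q (e \o c) x i !=set0.

Lemma Iset_comp_sub_Qu c i (lt_im : (i < m.+1)%N) : c ord0 = a0 ->
  Iset F Q (e \o c) x i `<=` Qu F Q (e (c (Ordinal lt_im))).
Proof.
move=> c0; apply: (@Iset_sub_Qu _ _ _ _ m.+1 (e \o c) x i lt_im isT) => /=.
by rewrite (_ : Ordinal _ = ord0) ?c0 //; apply: val_inj.
Qed.

Definition set_next c j b : 'I_m.+1 -> 'I_k :=
  fun i => if val i == j.+1 then b else c i.

Lemma set_next_le c j b (i : 'I_m.+1) : (i <= j)%N -> set_next c j b i = c i.
Proof. by move=> le_ij; rewrite /set_next ltn_eqF. Qed.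

Lemma set_next_succ c j b (i : 'I_m.+1) : val i = j.+1 -> set_next c j b i = b.
Proof. by rewrite /set_next => ->; rewrite eqxx. Qed.

Lemma Iset_set_next_neq0 c j b y : (j < m)%N ->
  (forall i, (i <= j)%N -> Iset F Q (e \o c) x i !=set0) ->
  stepF F (e \o c) (Iset F Q (e \o c) x j) j y -> Qu F Q (e b) y ->
  forall i, (i <= j.+1)%N -> Iset F Q (e \o set_next c j b) x i !=set0.
Proof.
move=> lt_jm Ic_neq0 y_step y_in.
have Iset_next i : (i <= j)%N ->
    Iset F Q (e \o set_next c j b) x i = Iset F Q (e \o c) x i.
  by move=> le_ij; apply: Iset_eq_prefix => l le_li /=; rewrite set_next_le // (leq_trans le_li).
move=> i; rewrite leq_eqVlt => /orP[/eqP ->|le_ij]; last by rewrite Iset_next //; apply: Ic_neq0.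
exists y; split=> /=; last by rewrite (stepQ_ord _ _ _ (lt_jm : (j.+1 < m.+1)%N)) /= set_next_succ.
rewrite Iset_next // !(stepF_ord _ _ _ (ltnW lt_jm : (j < m.+1)%N)) /= set_next_le // in y_step *.
Qed.

Lemma feasible_extend j c : (j <= m)%N -> c ord0 = a0 ->
  (forall i, (i <= j)%N -> Iset F Q (e \o c) x i !=set0) ->
  exists2 c', feasible c' & forall i : 'I_m.+1, (i <= j)%N -> c' i = c i.
Proof.
move=> le_jm; move Ed : (m - j)%N => d.
elim: d j c le_jm Ed => [|d IH] j c le_jm Ed c0 Ic_neq0.
  have eq_jm : j = m by apply/eqP; rewrite eqn_leq le_jm -subn_eq0 Ed.
  by subst j; exists c.
have lt_jm : (j < m)%N by rewrite -subn_gt0 Ed.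
have lt_jSm : (j < m.+1)%N := ltnW lt_jm.
have [z z_in] := Ic_neq0 j (leqnn j).
have [y y_in] := F_neq0 z (e (c (Ordinal lt_jSm))).
have [b y_inb] : exists b, Qu F Q (e b) y.
  by apply: cover_Qu; apply: (Iset_comp_sub_Qu lt_jSm c0 z_in).2.
have y_step : stepF F (e \o c) (Iset F Q (e \o c) x j) j y.
  by rewrite (stepF_ord _ _ _ lt_jSm); exists z.
have [|||c' c'_feas c'_pref] := IH j.+1 (set_next c j b) lt_jm.
- by rewrite subnS Ed.
- by rewrite set_next_le.
- exact: Iset_set_next_neq0 y_step y_inb.
by exists c' => // i le_ij; rewrite c'_pref ?set_next_le //; apply: leqW.
Qed.

Lemma feasible_branch c i y : feasible c -> (i < m)%N ->
  stepF F (e \o c) (Iset F Q (e \o c) x i) i y ->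
  exists2 c', feasible c' & (forall l : 'I_m.+1, (l <= i)%N -> c' l = c l) /\
    stepQ F Q (e \o c') i.+1 y.
Proof.
move=> [c0 Ic_neq0] lt_im y_step.
have lt_iSm : (i < m.+1)%N := ltnW lt_im.
have y_in_Q : Q y.
  move: (y_step); rewrite (stepF_ord _ _ _ lt_iSm) => -[z z_in].
  exact: (Iset_comp_sub_Qu lt_iSm c0 z_in).2.
have [b y_inb] := cover_Qu y_in_Q.
have Ic_neq0_i l : (l <= i)%N -> Iset F Q (e \o c) x l !=set0.
  by move=> le_li; apply: Ic_neq0; rewrite (leq_trans le_li).
have [||c' c'_feas c'_pref] := @feasible_extend i.+1 (set_next c i b) lt_im.
- by rewrite set_next_le.
- exact: Iset_set_next_neq0 y_step y_inb.
exists c' => //; split=> [l le_li|].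
  by rewrite c'_pref ?set_next_le // leqW.
by rewrite (stepQ_ord _ _ _ (lt_im : (i.+1 < m.+1)%N)) /= c'_pref ?set_next_succ.
Qed.

Lemma adm_point_feasible : adm_point F Q [set e \o c | c in feasible] x.
Proof.
split; first exact: x_in.1.
move=> _ [c c_feas <-]; split; [|split].
- move=> i lt_im y y_step.
  have [c' c'_feas [c'_pref y_in]] := feasible_branch c_feas lt_im y_step.
  exists (e \o c') => //; split; first by exists c'.
  by move=> l le_li /=; rewrite c'_pref.
- by move=> i lt_im; apply: c_feas.2.
- move=> i eq_im y; have lt_im : (i < m.+1)%N by rewrite eq_im.
  rewrite (stepF_ord _ _ _ lt_im) => -[z z_in].
  exact: (Iset_comp_sub_Qu lt_im c_feas.1 z_in).2.
Qed.

Lemma feasible_walk c : feasible c -> is_walk adm_edge (finfun c).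
Proof.
move=> [c0 Ic_neq0]; apply/forallP => i; apply/forallP => j; apply/implyP => /eqP ji.
rewrite !ffunE; apply/asboolP.
have := Ic_neq0 j (ltn_ord j); rewrite ji => -[y [/= y_step y_in]].
rewrite (stepF_ord _ _ _ (ltn_ord i)) in y_step.
rewrite -ji (stepQ_ord _ _ _ (ltn_ord j)) in y_in.
have [z z_in z_step] := y_step.
have ord_val (l : 'I_m.+1) (lt_lm : (l < m.+1)%N) : Ordinal lt_lm = l by apply: val_inj.
exists z; split; last by exists y; rewrite /= -(ord_val i (ltn_ord i)) -(ord_val j (ltn_ord j)).
by have := Iset_comp_sub_Qu (ltn_ord i) c0 z_in; rewrite ord_val.
Qed.

End Itineraries.

Lemma spanning_adm_walks m :
  spanning F Q ((fun c : {ffun 'I_m.+1 -> 'I_k} => e \o c) @` [set c | is_walk adm_edge c]).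
Proof.
move=> x Qx; have [a0 x_in] := cover_Qu Qx.
exists [set e \o c | c in @feasible m x a0]; last exact: adm_point_feasible.
split.
  move=> _ [c c_feas <-]; exists (finfun c); first exact: (feasible_walk x_in c_feas : is_walk _ _).
  by apply/funext => l /=; rewrite ffunE.
split; [|split].
- have [|c c_feas _] := @feasible_extend m x a0 x_in 0 (fun=> a0) (leq0n m) erefl.
    by move=> i; rewrite leqn0 => /eqP ->; exists x.
  by exists (e \o c), c.
- move=> _ _ [c1 [c10 _] <-] [c2 [c20 _] <-] j j0 /=.
  by rewrite (_ : j = ord0) ?c10 ?c20 //; apply: val_inj.
- by exists x; apply: adm_point_feasible.
Qed.

End PathSpanning.

Lemma has_card_uniq (V : eqType) (s : seq V) : uniq s -> has_card [set x | x \in s] (size s).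
Proof.
move=> s_uniq; exists (tnth (in_tuple s)); split; first exact/tuple_uniqP.
apply/seteqP; split=> [_ [i _ <-]|x]; first exact: mem_tnth.
by move=> /(tnthP (in_tuple s))[i ->]; exists i.
Qed.

Lemma has_card_image (T : finType) (V : Type) (P : pred T) (g : T -> V) :
  exists2 N, (N <= #|P|)%N & has_card (g @` [set x | P x]) N.
Proof.
pose gP := [seq (g x : {classic V}) | x <- enum P].
exists (size (undup gP)); first by rewrite cardE -(size_map g) size_undup.
suff -> : g @` [set x | P x] = [set y | y \in undup gP] by apply: has_card_uniq; rewrite undup_uniq.
apply/seteqP; split=> [_ [x Px <-]|y]; rewrite /= mem_undup.
  by apply: map_f; rewrite mem_enum.
by move=> /mapP[x]; rewrite mem_enum => Px ->; exists x.
Qed.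

Section SpectralRadius.
Variable R : realType.
Local Notation normc := (@Normc.normc R).

Lemma has_sup_spectrum k (M : 'M[R[i]]_k) :
  has_sup ([set 0] `|` [set normc l | l in [set l | eigenvalue M l]]).
Proof.
split; first by exists 0; left.
case: k M => [|k] M.
  exists 0 => _ [-> //|[l l_eig <-]].
  by move: l_eig; rewrite /= /eigenvalue flatmx0 eqxx.
have [rs char_rs] := closed_field_poly_normal (char_poly M).
rewrite (monicP (char_poly_monic M)) scale1r in char_rs.
exists (\sum_(z <- rs) normc z) => _ [-> |[l l_eig <-]].
  by apply: sumr_ge0 => z _; apply: normc_ge0.
have l_rs : l \in rs by rewrite -root_prod_XsubC -char_rs -eigenvalue_root_char.
by rewrite (big_rem l) //= lerDl sumr_ge0 // => z _; apply: normc_ge0.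
Qed.

Lemma spectral_radius_ge0 k (M : 'M[R[i]]_k) : 0 <= spectral_radius M.
Proof. by apply: sup_upper_bound (has_sup_spectrum M) _ _; left. Qed.

Lemma eigenvalue_le_spectral_radius k (M : 'M[R[i]]_k) z :
  eigenvalue M z -> normc z <= spectral_radius M.
Proof. by move=> z_eig; apply: sup_upper_bound (has_sup_spectrum M) _ _; right; exists z. Qed.

Lemma walks_geometric_bound k (E : rel 'I_k) (s : R) : 0 < s ->
  (forall z, eigenvalue (\matrix_(a, b) (E a b)%:R : 'M[R[i]]_k) z -> normc z < s) ->
  exists2 K, 1 <= K & forall m, (\sum_b nwalks E m b)%:R <= K * s ^+ m.+1.
Proof.
case: k E => [|k] E s_gt0 eig_lt.
  by exists 1 => // m; rewrite big_ord0 mul1r exprn_ge0 // ltW.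
have [D D_ge0 A_le] := mx_pow_geometric_bound (ltW s_gt0) eig_lt.
exists (1 + k.+1%:R ^+ 2 * D / s); first by rewrite lerDl divr_ge0 ?mulr_ge0 // ltW.
move=> m; have walks_le : (\sum_b nwalks E m b)%:R <= k.+1%:R ^+ 2 * D * s ^+ m.
  have -> : (\sum_b nwalks E m b)%:R = normc (\sum_b nwalks E m b)%:R.
    by rewrite normcMn Normc.normc1.
  rewrite natr_sum.
  under eq_bigr => b _ do rewrite nwalks_mx_pow.
  apply: le_trans (normc_sum _) _.
  apply: (@le_trans _ _ (\sum_(b < k.+1) \sum_(a < k.+1) D * s ^+ m)).
    apply: ler_sum => b _; apply: le_trans (normc_sum _) _.
    by apply: ler_sum => a _; apply: A_le.
  by rewrite !sumr_const card_ord -mulrnA -[_ *+ (_ * _)]mulr_natl natrM expr2 !mulrA.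
apply: le_trans walks_le _.
by rewrite [s ^+ m.+1]exprS mulrDl mul1r mulrA divfK ?gt_eqF // lerDr mulr_ge0 ?exprn_ge0 // ltW.
Qed.

End SpectralRadius.

Lemma adm_matrixE (R : realType) (X U : Type) (F : X -> U -> set X) (Q : set X)
    k (e : 'I_k -> U) :
  adm_matrix R F Q e = \matrix_(a, b) (adm_edge F Q e a b)%:R.
Proof. by apply/matrixP => a b; rewrite !mxE /adm_edge; case: (`[< _ >]). Qed.

Section Entropy.
Variable R : realType.
Local Open Scope ereal_scope.

Lemma limn_esup_le (u : (\bar R)^nat) l N :
  (forall n, (N <= n)%N -> u n <= l) -> limn_esup u <= l.
Proof.
move=> u_le; apply: (@le_trans _ _ (ereal_sup (u @` [set n | (N <= n)%N]))).
  by apply: ereal_inf_lbound; exists [set n | (N <= n)%N] => //; exists N.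
by apply: ge_ereal_sup => _ [n le_Nn <-]; exact: u_le.
Qed.

Lemma r_inv_ge0 (X U : Type) (F : X -> U -> set X) n Q : 0 <= r_inv R F n Q.
Proof. by apply: le_ereal_inf_tmp => _ [k _ <-]; rewrite lee_fin ler0n. Qed.

Lemma r_inv_le_nwalks (X U : Type) (F : X -> U -> set X) (Q : set X) k (e : 'I_k -> U) m :
  (forall x u, F x u !=set0) -> is_cover F Q (range e) ->
  r_inv R F m.+1 Q <= ((\sum_b nwalks (adm_edge F Q e) m b)%:R)%:E.
Proof.
move=> F_neq0 e_cover.
have [N le_N cardN] := has_card_image (is_walk (adm_edge F Q e) (n:=m.+1))
  (fun c : {ffun 'I_m.+1 -> 'I_k} => e \o c).
apply: (@le_trans _ _ (N%:R)%:E).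
  apply: ereal_inf_lbound; exists N => //.
  exists [set e \o c | c in [set c | is_walk (adm_edge F Q e) c]].
  by split; first exact: spanning_adm_walks.
by rewrite lee_fin ler_nat (leq_trans le_N) // -cardsE card_walks.
Qed.

Lemma elog2_le_geometric (t : \bar R) (s K : R) n : (0 < s)%R -> (0 < K)%R ->
  0 <= t -> t <= (K * s ^+ n.+1)%:E ->
  (n.+1%:R^-1)%:E * elog2 t <= (ln s / ln 2 + ln K / (n.+1%:R * ln 2))%:E.
Proof.
move=> s_gt0 K_gt0; case: t => [t t_ge0|_|//]; last by rewrite leye_eq.
rewrite lee_fin => t_le.
rewrite /elog2; case: eqP => [_|/eqP t_neq0].
  by rewrite muleC gt0_mulNye ?leNye // lte_fin invr_gt0 ltr0n.
have ln2_gt0 : (0 < ln (2 : R))%R by rewrite ln_gt0 // ltr1n.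
have t_gt0 : (0 < t)%R by rewrite lt_def t_neq0.
have ln_t_le : (ln t <= ln K + n.+1%:R * ln s)%R.
  rewrite mulr_natl -lnXn // -lnM ?posrE ?exprn_gt0 //.
  by rewrite ler_ln ?posrE ?mulr_gt0 ?exprn_gt0.
rewrite -EFinM lee_fin invfM.
have n_neq0 : n.+1%:R != 0%R :> R by rewrite pnatr_eq0.
have -> : (ln s / ln 2 = n.+1%:R * ln s * (n.+1%:R^-1 / ln 2))%R.
  by field; rewrite [(1 + _)%R]addrC natr1 n_neq0 gt_eqF.
rewrite -mulrDl mulrCA ler_pM2r ?mulr_gt0 ?invr_gt0 ?ltr0n //.
by rewrite addrC.
Qed.

Lemma h_inv_le_geometric (X U : Type) (F : X -> U -> set X) (Q : set X) (s K : R) :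
  (0 < s)%R -> (1 <= K)%R ->
  (forall m, r_inv R F m.+1 Q <= (K * s ^+ m.+1)%:E) ->
  h_inv R F Q <= (ln s / ln 2)%:E.
Proof.
move=> s_gt0 K_ge1 r_inv_le; apply/lee_addgt0Pr => eps eps_gt0.
have ln2_gt0 : (0 < ln (2 : R))%R by rewrite ln_gt0 // ltr1n.
pose N := (Num.truncn (ln K / (ln 2 * eps))).+1.
apply: (@limn_esup_le _ _ N) => -[//|m] le_Nm.
apply: le_trans (elog2_le_geometric s_gt0 _ (r_inv_ge0 F m.+1 Q) (r_inv_le m)) _.
  by apply: lt_le_trans K_ge1.
rewrite -EFinD lee_fin lerD2l ler_pdivrMr ?mulr_gt0 ?ltr0n // mulrCA [(eps * _)%R]mulrC.
have := truncnS_gt (ln K / (ln 2 * eps)); rewrite ltr_pdivrMr ?mulr_gt0 // => lnK_lt.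
by apply/ltW/(lt_le_trans lnK_lt); rewrite ler_pM2r ?mulr_gt0 // ler_nat.
Qed.

Lemma le_elog2 (x : \bar R) (r : R) : (0 <= r)%R ->
  (forall s, (r < s)%R -> x <= (ln s / ln 2)%:E) -> x <= elog2 r%:E.
Proof.
move=> r_ge0 x_le; have ln2_gt0 : (0 < ln (2 : R))%R by rewrite ln_gt0 // ltr1n.
rewrite /elog2; case: eqP => [r0|/eqP r_neq0].
  have x_le_all (M : R) : x <= M%:E.
    by have := x_le (expR (M * ln 2)); rewrite r0 expR_gt0 expRK mulfK ?gt_eqF //; apply.
  case: x x_le_all {x_le} => [x||] // x_le_all.
    by exfalso; have := x_le_all (x - 1)%R; rewrite lee_fin; lra.
  by have := x_le_all 0%R.
have r_gt0 : (0 < r)%R by rewrite lt_def r_neq0.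
apply/lee_addgt0Pr => eps eps_gt0.
have := x_le (r * expR (eps * ln 2))%R.
rewrite lnM ?posrE ?expR_gt0 // expRK mulrDl mulfK ?gt_eqF // EFinD; apply.
by rewrite ltr_pMr // expR_gt1 mulr_gt0.
Qed.

End Entropy.

Lemma h_inv_le_log_spectral_radius (R : realType) (X U : Type) (F : X -> U -> set X)
    (Q : set X) k (e : 'I_k -> U) :
  (forall x u, F x u !=set0) -> is_cover F Q (range e) ->
  (h_inv R F Q <= elog2 (spectral_radius (adm_matrix R F Q e))%:E)%E.
Proof.
move=> F_neq0 e_cover; apply: le_elog2 (spectral_radius_ge0 _) _ => s rho_lt_s.
have s_gt0 := le_lt_trans (spectral_radius_ge0 _) rho_lt_s.
have eig_lt z : eigenvalue (\matrix_(a, b) (adm_edge F Q e a b)%:R) z -> Normc.normc z < s.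
  rewrite -adm_matrixE => z_eig.
  exact: le_lt_trans (eigenvalue_le_spectral_radius z_eig) rho_lt_s.
have [K K_ge1 nwalks_le] := walks_geometric_bound s_gt0 eig_lt.
apply: (h_inv_le_geometric s_gt0 K_ge1) => m.
by apply: le_trans (r_inv_le_nwalks R m F_neq0 e_cover) _; rewrite lee_fin.
Qed.

Local Open Scope ereal_scope.

Theorem corollary3p9 (R : realType) (X U : Type) (F : X -> U -> set X)
    (HX : inhabited X) (HU : inhabited U)
    (HF : forall x u, F x u !=set0)
    (Q : set X) (HQ : controlled_invariant F Q) :
  h_inv R F Q <=
  ereal_inf [set elog2 (spectral_radius (adm_matrix R F Q (projT2 e)))%:E
            | e in [set e : {k : nat & 'I_k -> U} |
                     injective (projT2 e) /\ is_cover F Q (range (projT2 e))]].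
Proof.
apply: le_ereal_inf_tmp => _ [[k e] /= [_ e_cover] <-].
exact: h_inv_le_log_spectral_radius.
Qed.
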